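(* Consider NSGA-III (as described in the context) with population size $\mu \ge n+1$ and $\mu = \mathrm{poly}(n)$, nadir threshold $\varepsilon_{\mathrm{nad}} \ge n$ and reference-point parameter $p \ge 4\sqrt{2}\,n$, maximizing $2$-OMM on $\{0,1\}^n$, and let $c>0$ be a constant. Then, with probability $1-o(1)$, after $cn/\ln(n)$ generations there is no $y \in P_t$ with $|y|_1 \ge 3n/4$.
   Context: For $x\in\{0,1\}^n$ let $|x|_1$ be its number of ones and $|x|_0 = n-|x|_1$ its number of zeros. The bi-objective function $2$-OMM$\colon \{0,1\}^n\to\mathbb{N}_0^2$ is $x\mapsto (|x|_1,|x|_0)$, to be maximized. NSGA-III with population size $\mu$ works as follows. $P_0$ consists of $\mu$ independent uniformly random bit strings. In generation $t$, an offspring multiset $Q_t$ of $\mu$ individuals is created, each by choosing a parent uniformly at random from $P_t$ and flipping each bit independently with probability $1/n$. $R_t=P_t\cup Q_t$ is partitioned by non-dominated sorting into fronts $F^1_t,F^2_t,\dots$ ($F^1_t$ the non-dominated individuals, $F^i_t$ those dominated only by individuals of earlier fronts); let $i^*$ be minimal with $\sum_{i\le i^*}|F^i_t|\ge\mu$; all individuals of $F^1_t,\dots,F^{i^*-1}_t$ survive and the rest are selected from $F^{i^*}_t$ as follows. Objectives are normalized as $f^n_j(x)=(f_j(x)-y_j^{\min})/(y_j^{\mathrm{nad}}-y_j^{\min})$, where $y^{\min}_j$ is the minimum value of objective $j$ seen so far and the nadir point $y^{\mathrm{nad}}$ is computed by the procedure of Wietheger and Doerr (2023), satisfying $y^{\mathrm{nad}}_j\ge\varepsilon_{\mathrm{nad}}$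 for a user threshold $\varepsilon_{\mathrm{nad}}>0$. The reference points are $\mathcal{R}_p=\{(a_1/p,\dots,a_m/p): a_i\in\mathbb{N}_0,\sum a_i=p\}$ ($m$ the number of objectives). Each individual is associated with the reference point $r$ minimizing the distance from its normalized vector to the line through the origin and $r$. Then repeatedly a reference point $r$ with the fewest already selected associated individuals (counting the individuals of earlier fronts; ties broken uniformly at random) is chosen; among the not-yet-selected individuals of $F^{i^*}_t$ associated with $r$, one whose normalized vector is closest to $r$ is selected (ties broken at random); if none exists, $r$ is discarded; this stops when $\mu$ individuals are selected in total, giving $P_{t+1}$. Asymptotic notation refers to $n\to\infty$. *)

From HB Require Import structures.
From mathcomp Require Import all_boot all_order all_algebra.
From mathcomp Require Import reals exp.
Set Implicit Arguments. Unset Strict Implicit. Unset Printing Implicit Defensive.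
Import Order.TTheory GRing.Theory Num.Theory.
Local Open Scope ring_scope.

Section Dist.
Variable R : realType.

Definition dist (T : Type) := seq (T * R).
Definition dret T (x : T) : dist T := [:: (x, 1)].
Definition dbind T U (d : dist T) (f : T -> dist U) : dist U :=
  flatten [seq [seq (y.1, x.2 * y.2) | y <- f x.1] | x <- d].
(* uniform distribution over the entries of s (multiset semantics) *)
Definition dunif T (s : seq T) : dist T := [seq (x, (size s)%:R^-1) | x <- s].
Definition dflip (q : R) : dist bool := [:: (true, q); (false, 1 - q)].
Fixpoint diid T (k : nat) (d : dist T) : dist (seq T) :=
  match k with
  | 0 => dret [::]
  | k'.+1 => dbind d (fun x => dbind (diid k' d) (fun s => dret (x :: s)))
  end.
Definition dprob T (d : dist T) (E : T -> bool) : R :=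
  \sum_(x <- d) (if E x.1 then x.2 else 0).

Definition bitstr := seq bool.
Definition ones (x : bitstr) : nat := count id x.
Definition zeros (x : bitstr) : nat := count negb x.
Definition omm2 (x : bitstr) : nat * nat := (ones x, zeros x).

Fixpoint flipbits (q : R) (x : bitstr) : dist bitstr :=
  match x with
  | [::] => dret [::]
  | b :: x' => dbind (dflip q) (fun fl =>
                 dbind (flipbits q x') (fun y => dret (addb b fl :: y)))
  end.
Definition mutate (n : nat) (x : bitstr) : dist bitstr := flipbits (n%:R^-1) x.
Definition unif_bitstr (n : nat) : dist bitstr := flipbits (2^-1) (nseq n false).

(** * Non-dominated sorting (maximization); individuals are indices into R_t *)
Definition dominates (u v : nat * nat) : bool :=
  [&& (v.1 <= u.1)%N, (v.2 <= u.2)%N & (v.1 < u.1)%N || (v.2 < u.2)%N].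

Definition nondom (Rt : seq bitstr) (S : seq nat) : seq nat :=
  [seq i <- S | ~~ has (fun j => dominates (omm2 (nth [::] Rt j)) (omm2 (nth [::] Rt i))) S].

Fixpoint fronts_aux (Rt : seq bitstr) (fuel : nat) (S : seq nat) : seq (seq nat) :=
  match fuel with
  | 0 => [::]
  | fuel'.+1 =>
      if S is [::] then [::] else
      let F := nondom Rt S in F :: fronts_aux Rt fuel' [seq i <- S | i \notin F]
  end.
Definition fronts (Rt : seq bitstr) : seq (seq nat) :=
  fronts_aux Rt (size Rt) (iota 0 (size Rt)).

(* (F^1 ++ ... ++ F^(istar-1), F^istar) with istar minimal such that the first istar
   fronts contain at least mu individuals *)
Fixpoint split_fronts (mu : nat) (Fs : seq (seq nat)) : seq nat * seq nat :=
  match Fs with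
  | [::] => ([::], [::])
  | F :: Fs' => if (mu <= size F)%N then ([::], F)
                else let AB := split_fronts (mu - size F) Fs' in (F ++ AB.1, AB.2)
  end.

Definition vec := (R * R)%type.
Definition dotv (u v : vec) : R := u.1 * v.1 + u.2 * v.2.

Definition minseq (s : seq nat) : nat := foldr minn (head 0%N s) s.

Definition ymin (hist : seq (seq bitstr)) : vec :=
  let all := flatten hist in
  ((minseq [seq ones x | x <- all])%:R, (minseq [seq zeros x | x <- all])%:R).

Definition normalize (ymn ynad : vec) (x : bitstr) : vec :=
  (((ones x)%:R - ymn.1) / (ynad.1 - ymn.1), ((zeros x)%:R - ymn.2) / (ynad.2 - ymn.2)).

(* reference point number a of R_p (m = 2): (a/p, (p-a)/p), a = 0..p *)
Definition refpt (p a : nat) : vec := (a%:R / p%:R, (p - a)%:R / p%:R).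

(* squared distance from v to the line through the origin and r *)
Definition dist2_line (v r : vec) : R :=
  let s := dotv v r / dotv r r in
  let w := (v.1 - s * r.1, v.2 - s * r.2) in dotv w w.

Definition dist2_pt (v r : vec) : R :=
  let w := (v.1 - r.1, v.2 - r.2) in dotv w w.

(* the reference point minimizing the distance to its line
   (ties: the one with smallest index) *)
Definition assoc (p : nat) (v : vec) : nat :=
  foldl (fun best a => if dist2_line v (refpt p a) < dist2_line v (refpt p best)
                       then a else best) 0%N (iota 1 p).

Definition minR (s : seq R) : R := foldr Num.min (head 0 s) s.

Section Niching.
Variables (mu p : nat) (fn : nat -> vec) (before Fstar : seq nat).
(* fn i = normalized objective vector of individual i of R_t *)
Let asc (i : nat) : nat := assoc p (fn i).

Fixpoint niche (fuel : nat) (act : seq nat) (sel : seq nat) : dist (seq nat) :=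
  match fuel with
  | 0 => dret sel
  | fuel'.+1 =>
    if (mu <= size before + size sel)%N then dret sel else
    if act is [::] then dret sel else
    let rho a := count (fun i => asc i == a) (before ++ sel) in
    let m := minseq (map rho act) in
    let cands := [seq a <- act | rho a == m] in
    dbind (dunif cands) (fun a =>
      let C := [seq i <- Fstar | (i \notin sel) && (asc i == a)] in
      if C is [::] then niche fuel' (rem a act) sel else
      let dm := minR [seq dist2_pt (fn i) (refpt p a) | i <- C] in
      let C' := [seq i <- C | dist2_pt (fn i) (refpt p a) == dm] in
      dbind (dunif C') (fun i => niche fuel' act (rcons sel i)))
  end.
End Niching.

Section NSGA3.
Variables (n mu p : nat) (nad : seq (seq bitstr) -> vec).
(* nad hist = nadir point y^nad computed from the history [R_0; ...; R_t] *)

Definition survival (hist : seq (seq bitstr)) (Rt : seq bitstr) : dist (seq bitstr) :=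
  let hist' := rcons hist Rt in
  let fn i := normalize (ymin hist') (nad hist') (nth [::] Rt i) in
  let BF := split_fronts mu (fronts Rt) in
  dbind (niche mu p fn BF.1 BF.2 (p.+1 + size BF.2).+1 (iota 0 p.+1) [::])
        (fun sel => dret [seq nth [::] Rt i | i <- BF.1 ++ sel]).

(* returns (R_t, P_(t+1)) *)
Definition generation (hist : seq (seq bitstr)) (P : seq bitstr)
  : dist (seq bitstr * seq bitstr) :=
  dbind (diid mu (dbind (dunif P) (mutate n))) (fun Q =>
  let Rt := P ++ Q in
  dbind (survival hist Rt) (fun P' => dret (Rt, P'))).

Fixpoint run_aux (T : nat) (hist : seq (seq bitstr)) (P : seq bitstr)
  : dist (seq (seq bitstr)) :=
  match T with
  | 0 => dret [::]
  | T'.+1 => dbind (generation hist P) (fun RP =>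
               dbind (run_aux T' (rcons hist RP.1) RP.2) (fun tr => dret (RP.2 :: tr)))
  end.

(* distribution of the trajectory [P_0; P_1; ...; P_T] *)
Definition nsga3_run (T : nat) : dist (seq (seq bitstr)) :=
  dbind (diid mu (unif_bitstr n)) (fun P0 =>
  dbind (run_aux T [::] P0) (fun tr => dret (P0 :: tr))).
End NSGA3.

Definition no_high (n : nat) (tr : seq (seq bitstr)) : bool :=
  all (fun P => all (fun y => (4 * ones y < 3 * n)%N) P) tr.

End Dist.

From HB Require Import structures.
From mathcomp Require Import all_boot all_order all_algebra.
From mathcomp Require Import reals exp.
From mathcomp Require Import topology sequences.
From mathcomp Require Import ring lra zify.
Import Order.TTheory GRing.Theory Num.Theory.
Local Open Scope classical_set_scope.
Local Open Scope ring_scope.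

(** Give an individual [y] the weight [2 ^ |y|_1] and a population the sum of
    the weights of its members.  Survival keeps a sub-multiset of [R_t], and
    standard bit mutation multiplies the expected weight of its parent by at
    most [(1 + 1/n)^n <= e]; hence the expected weight of [P_(t+1)] is at most
    [(1 + e)] times that of [P_t], and the expected total weight of
    [P_0, ..., P_T] is at most [mu (3/2)^n (2 + e)^T].  An individual with at
    least [3n/4] ones weighs [2^(3n/4)], so by Markov's inequality the failure
    probability is at most [mu (3/2)^n (2 + e)^T / 2^(3n/4)], which vanishes
    since [(3/2)^4 < 2^3], [mu] is polynomial and [T = O(n / ln n)].  Neither
    the niching rule, nor the normalization, nor the reference points matter. *)

Section FiniteDistributions.
Context {R : realType}.

Definition expect {T} (d : dist R T) (g : T -> R) : R := \sum_(x <- d) x.2 * g x.1.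

Definition dist_on {T} (d : dist R T) (P : pred T) : bool :=
  [&& all (fun x => 0 <= x.2) d, expect d (fun _ => 1) == 1 & all (fun x => P x.1) d].

Lemma eq_expect {T} (d : dist R T) (g h : T -> R) : g =1 h -> expect d g = expect d h.
Proof. by move=> gh; apply: eq_bigr => x _; rewrite gh. Qed.

Lemma expect_ret {T} (x : T) g : expect (dret R x) g = g x.
Proof. by rewrite /expect big_seq1 mul1r. Qed.

Lemma expect_bind {T U} (d : dist R T) (f : T -> dist R U) g :
  expect (dbind d f) g = expect d (fun x => expect (f x) g).
Proof.
rewrite /expect big_flatten big_map; apply: eq_bigr => x _.
by rewrite big_map mulr_sumr; apply: eq_bigr => y _; rewrite mulrA.
Qed.

Lemma expect_bind_ret {T U} (d : dist R T) (h : T -> U) g :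
  expect (dbind d (fun x => dret R (h x))) g = expect d (fun x => g (h x)).
Proof. by rewrite expect_bind; apply: eq_bigr => x _; rewrite expect_ret. Qed.

Lemma expectD {T} (d : dist R T) g h :
  expect d (fun x => g x + h x) = expect d g + expect d h.
Proof. by rewrite /expect -big_split; apply: eq_bigr => x _; rewrite mulrDr. Qed.

Lemma expectZ {T} (d : dist R T) k g : expect d (fun x => k * g x) = k * expect d g.
Proof. by rewrite /expect mulr_sumr; apply: eq_bigr => x _; rewrite mulrCA. Qed.

Lemma sub_dist_on {T} {d : dist R T} {P Q : pred T} :
  subpred P Q -> dist_on d P -> dist_on d Q.
Proof.
move=> PQ /and3P[d_ge0 d1 dP]; apply/and3P; split=> //.
by apply: sub_all dP => x /PQ.
Qed.

Lemma dist_on_ret {T} (x : T) (P : pred T) : P x -> dist_on (dret R x) P.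
Proof. by move=> Px; rewrite /dist_on expect_ret /= ler01 Px eqxx. Qed.

Lemma eq_in_expect {T} {d : dist R T} {P : pred T} g h :
  dist_on d P -> (forall x, P x -> g x = h x) -> expect d g = expect d h.
Proof.
case/and3P=> _ _ + gh; rewrite /expect; elim: d => [|x d IH]; rewrite ?big_nil ?big_cons //=.
by case/andP=> Px dP; rewrite gh // IH.
Qed.

Lemma all_dbind {T U} (d : dist R T) (f : T -> dist R U) (a : pred (U * R)) :
  all a (dbind d f) = all (fun x => all (fun y => a (y.1, x.2 * y.2)) (f x.1)) d.
Proof. by elim: d => //= x d IH; rewrite all_cat all_map IH. Qed.

Lemma dist_on_bind {T U} {d : dist R T} {f : T -> dist R U} {P : pred T} {Q : pred U} :
  dist_on d P -> (forall x, P x -> dist_on (f x) Q) -> dist_on (dbind d f) Q.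
Proof.
move=> dP' fQ; have /and3P[d_ge0 /eqP d1 dP] := dP'.
have dfQ : all (fun x => (0 <= x.2) && dist_on (f x.1) Q) d.
  by rewrite all_predI d_ge0; apply: sub_all dP => x /fQ.
apply/and3P; split; rewrite ?all_dbind.
- apply: sub_all dfQ => x /andP[x0 /and3P[f_ge0 _ _]] /=.
  by apply: sub_all f_ge0 => y /= y0; rewrite mulr_ge0.
- rewrite expect_bind -[eqbRHS]d1 (eq_in_expect _ (fun=> 1) dP') // => x /fQ.
  by case/and3P=> _ /eqP.
- by apply: sub_all dfQ => x /andP[_ /and3P[_ _ fxQ]].
Qed.

Lemma expect_cst {T} {d : dist R T} {P : pred T} k : dist_on d P -> expect d (fun _ => k) = k.
Proof. by case/and3P=> _ /eqP d1 _; rewrite -[k]mulr1 expectZ d1. Qed.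

Lemma ler_expect {T} {d : dist R T} {P : pred T} {g h : T -> R} :
  dist_on d P -> (forall x, P x -> g x <= h x) -> expect d g <= expect d h.
Proof.
case/and3P=> + _ + gh; rewrite /expect; elim: d => [|x d IH]; rewrite ?big_nil ?big_cons //=.
by case/andP=> x0 d_ge0 /andP[Px dP]; rewrite lerD ?IH // ler_wpM2l ?gh.
Qed.

Lemma expect_unif {T} (s : seq T) g :
  expect (dunif R s) g = (size s)%:R^-1 * \sum_(x <- s) g x.
Proof. by rewrite /expect big_map mulr_sumr. Qed.

Lemma dist_on_unif {T} {s : seq T} {P : pred T} :
  (0 < size s)%N -> all P s -> dist_on (dunif R s) P.
Proof.
move=> s0 sP; apply/and3P; split; rewrite ?all_map.
- by apply: sub_all (all_predT s) => x _ /=; rewrite invr_ge0.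
- have sum1 : \sum_(x <- s) (1 : R) = (size s)%:R by rewrite -sum1_size natr_sum.
  by rewrite expect_unif sum1 mulVf // pnatr_eq0 -lt0n.
- exact: sub_all sP.
Qed.

Lemma expect_flip (q : R) g : expect (dflip q) g = q * g true + (1 - q) * g false.
Proof. by rewrite /expect !big_cons big_nil addr0. Qed.

Lemma dist_on_flip {q : R} : 0 <= q <= 1 -> dist_on (dflip q) predT.
Proof.
case/andP=> q0 q1; apply/and3P; split => //=; first by rewrite q0 subr_ge0 q1.
by rewrite expect_flip !mulr1 addrC subrK.
Qed.

Lemma dist_on_diid {T} k {d : dist R T} {P : pred T} :
  dist_on d P -> dist_on (diid k d) (fun s => all P s && (size s == k)).
Proof.
move=> dP; elim: k => [|k IH] /=; first exact: dist_on_ret.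
apply: (dist_on_bind dP) => x Px; apply: (dist_on_bind IH) => s /andP[sP /eqP sk].
by apply: dist_on_ret; rewrite /= Px sP sk /=.
Qed.

Lemma expect_diid_sum {T} k {d : dist R T} {P : pred T} g : dist_on d P ->
  expect (diid k d) (fun s => \sum_(y <- s) g y) = k%:R * expect d g.
Proof.
move=> dP; elim: k => [|k IH] /=; first by rewrite expect_ret big_nil mul0r.
rewrite expect_bind (eq_in_expect _ (fun x => g x + k%:R * expect d g) dP).
  by rewrite expectD (expect_cst _ dP) -[k.+1]add1n natrD mulrDl mul1r.
move=> x _; have dkP := dist_on_diid k dP.
rewrite expect_bind_ret (eq_in_expect _ (fun s => g x + \sum_(y <- s) g y) dkP).
  by rewrite expectD IH (expect_cst _ dkP).
by move=> s _; rewrite big_cons.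
Qed.

Lemma dprob_ge_markov {T} {d : dist R T} {P : pred T} (E : pred T) g a :
  dist_on d P -> 0 < a -> (forall x, P x -> 0 <= g x) ->
  (forall x, P x -> ~~ E x -> a <= g x) -> 1 - expect d g / a <= dprob d E.
Proof.
move=> dP a0 g0 gE.
have -> : dprob d E = expect d (fun x => if E x then 1 else 0).
  by apply: eq_bigr => x _; case: (E x.1); rewrite ?mulr1 ?mulr0.
have -> : 1 - expect d g / a = expect d (fun x => 1 + - a^-1 * g x).
  by rewrite expectD expectZ (expect_cst _ dP) mulNr mulrC.
apply: (ler_expect dP) => x Px; rewrite mulNr.
case: (boolP (E x)) => [_|/(gE x Px) agx].
  by rewrite gerBl mulr_ge0 ?g0 // invr_ge0 ltW.
by rewrite subr_le0 -(mulVf (lt0r_neq0 a0)) ler_pM2l ?invr_gt0.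
Qed.

End FiniteDistributions.

Section BitMutation.
Context {R : realType}.

Lemma dist_on_flipbits (q : R) x :
  0 <= q <= 1 -> dist_on (flipbits q x) (fun y => size y == size x).
Proof.
move=> q01; elim: x => [|b x IH] /=; first exact: dist_on_ret.
apply: (dist_on_bind (dist_on_flip q01)) => fl _.
by apply: (dist_on_bind IH) => y /eqP sy; apply: dist_on_ret; rewrite /= sy.
Qed.

Lemma expect_flipbits_exp2 (q : R) x :
  expect (flipbits q x) (fun y => 2 ^+ ones y) = (2 - q) ^+ ones x * (1 + q) ^+ zeros x.
Proof.
elim: x => [|b x IH] /=; first by rewrite expect_ret /ones /zeros /= !expr0 mulr1.
have cons_exp2 c : expect (flipbits q x) (fun y => 2 ^+ ones (c :: y))
                   = 2 ^+ c * ((2 - q) ^+ ones x * (1 + q) ^+ zeros x).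
  by rewrite -IH -expectZ; apply: eq_expect => y; rewrite /ones /= exprD.
rewrite expect_bind expect_flip !expect_bind_ret !cons_exp2 /ones /zeros.
by case: b => /=; rewrite !exprS; ring.
Qed.

Lemma expect_flipbits_exp2_le {q : R} x : 0 <= q <= 1 ->
  expect (flipbits q x) (fun y => 2 ^+ ones y) <= 2 ^+ ones x * (1 + q) ^+ size x.
Proof.
case/andP=> q0 q1; rewrite expect_flipbits_exp2 -(count_predC id x) exprD mulrA -exprMn.
have [base_ge0 ge0_2q le_base] : [/\ 0 <= 1 + q, 0 <= 2 - q & 2 - q <= 2 * (1 + q)].
  by split; lra.
by rewrite ler_wpM2r ?exprn_ge0 // lerXn2r ?nnegrE ?mulr_ge0.
Qed.

Lemma mutation_rate_prob {n} : (0 < n)%N -> 0 <= (n%:R : R)^-1 <= 1.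
Proof. by move=> n0; rewrite invr_ge0 ler0n invf_le1 ?ler1n ?ltr0n. Qed.

Lemma dist_on_mutate n x : (0 < n)%N -> dist_on (mutate R n x) (fun y => size y == size x).
Proof. by move=> /mutation_rate_prob; apply: dist_on_flipbits. Qed.

Lemma expect_mutate_exp2_le n x : (0 < n)%N -> size x = n ->
  expect (mutate R n x) (fun y => 2 ^+ ones y) <= expR 1 * 2 ^+ ones x.
Proof.
move=> n0 sx; rewrite /mutate mulrC.
apply: (le_trans (expect_flipbits_exp2_le x (mutation_rate_prob n0))).
apply: ler_wpM2l; first exact: exprn_ge0.
have n_neq0 : (n%:R : R) != 0 by rewrite pnatr_eq0 -lt0n.
rewrite sx -[in X in _ <= X](mulfV n_neq0) expRM_natl.
by apply: lerXn2r; rewrite ?nnegrE ?expR_ge0 ?expR_ge1Dx ?addr_ge0 ?invr_ge0.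
Qed.

Lemma dist_on_unif_bitstr n : dist_on (unif_bitstr R n) (fun y => size y == n).
Proof.
have := dist_on_flipbits (2^-1) (nseq n false); rewrite size_nseq; apply.
by rewrite invr_ge0 ler0n invf_le1 ?ler1n.
Qed.

Lemma expect_unif_bitstr_exp2 n :
  expect (unif_bitstr R n) (fun y => 2 ^+ ones y) = (1 + 2^-1) ^+ n.
Proof. by rewrite expect_flipbits_exp2 /ones /zeros !count_nseq /= mul0n mul1n mul1r. Qed.

End BitMutation.

Lemma foldr_selective_mem {T : eqType} (op : T -> T -> T) x0 s :
  (forall x y, op x y \in [:: x; y]) -> foldr op x0 s \in x0 :: s.
Proof.
move=> opP; elim: s => [|y s IH] /=; first exact: mem_head.
have := opP y (foldr op x0 s); rewrite !inE => /orP[/eqP->|/eqP->].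
  by rewrite eqxx orbT.
by move: IH; rewrite inE => /orP[->|->]; rewrite ?orbT.
Qed.

Lemma minseq_mem (s : seq nat) : (0 < size s)%N -> minseq s \in s.
Proof.
case: s => // x s _.
have minn_sel a b : minn a b \in [:: a; b].
  by rewrite /minn !inE; case: ltnP; rewrite eqxx ?orbT.
have := foldr_selective_mem minn x (x :: s) minn_sel.
by rewrite /minseq in_cons => /orP[/eqP->|//]; apply: mem_head.
Qed.

Lemma minR_mem {R : realType} (s : seq R) : (0 < size s)%N -> minR s \in s.
Proof.
case: s => // x s _.
have min_sel (a b : R) : Num.min a b \in [:: a; b].
  by rewrite minElt !inE; case: ifP; rewrite eqxx ?orbT.
have := foldr_selective_mem Num.min x (x :: s) min_sel.
by rewrite /minR in_cons => /orP[/eqP->|//]; apply: mem_head.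
Qed.

Lemma argmin_nat_nonempty (T : eqType) (F : T -> nat) (s : seq T) : (0 < size s)%N ->
  (0 < size [seq x <- s | F x == minseq [seq F y | y <- s]])%N.
Proof.
rewrite -(size_map F) => /minseq_mem /mapP[x xs xmin].
by rewrite size_filter -has_count; apply/hasP; exists x; rewrite // xmin.
Qed.

Lemma argmin_real_nonempty {R : realType} (T : eqType) (F : T -> R) (s : seq T) :
  (0 < size s)%N -> (0 < size [seq x <- s | F x == minR [seq F y | y <- s]])%N.
Proof.
rewrite -(size_map F) => /minR_mem /mapP[x xs xmin].
by rewrite size_filter -has_count; apply/hasP; exists x; rewrite // xmin.
Qed.

Lemma assoc_le {R : realType} p (v : vec R) : (assoc p v <= p)%N.
Proof.
rewrite /assoc; have : all (leq^~ p) (iota 1 p) by apply/allP => a; rewrite mem_iota; lia.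
move: (iota 1 p) => s; elim: s 0%N (leq0n p) => [//|a s IH] b bp /= /andP[ap sp].
by apply: IH => //; case: ifP.
Qed.

Section Niching.
Context {R : realType}.
Variables (mu p : nat) (fn : nat -> vec R) (before Fstar : seq nat).
Hypotheses (Fstar_uniq : uniq Fstar) (mu_le : (mu <= size before + size Fstar)%N).

(* Each round discards a reference point or selects a new individual, so the
   fuel suffices; while fewer than [mu] are selected, some unselected member of
   [Fstar] is still associated with an active reference point. *)
Lemma dist_on_niche fuel act sel :
  uniq sel -> all (mem Fstar) sel -> (size before + size sel <= mu)%N ->
  {in Fstar, forall i, i \notin sel -> assoc p (fn i) \in act} ->
  (size act + (size Fstar - size sel) < fuel)%N ->
  dist_on (niche mu p fn before Fstar fuel act sel)
    (fun s => [&& uniq s, all (mem Fstar) s & (size before + size s == mu)%N]).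
Proof.
elim: fuel act sel => [|fuel IH] act sel //= sel_uniq sel_sub sel_le act_cover fuel_gt.
case: leqP => [enough | short].
  by apply: dist_on_ret; rewrite sel_uniq sel_sub eqn_leq sel_le.
case: act act_cover fuel_gt => [|a0 act] act_cover fuel_gt.
  have /(uniq_leq_size Fstar_uniq) : {subset Fstar <= sel}.
    by move=> i iF; apply/negPn/negP => /(act_cover i iF).
  move=> F_le; have : (mu <= size before + size sel)%N by rewrite (leq_trans mu_le) ?leq_add2l.
  by rewrite leqNgt short.
apply: (dist_on_bind (P := fun a => a \in a0 :: act)).
  apply: dist_on_unif; first exact: argmin_nat_nonempty.
  by apply/allP => a; rewrite mem_filter => /andP[].
move=> a a_act; case Ca: [seq i <- Fstar | _] => [|i0 C0].
  apply: IH => //; last by rewrite size_rem //=; move: fuel_gt => /=; lia.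
  move=> i iF i_sel; have i_a := act_cover i iF i_sel; apply: rem_mem => //.
  apply/eqP => ia; suff : i \in [::] by [].
  by rewrite -Ca mem_filter i_sel ia eqxx iF.
apply: (dist_on_bind (P := fun i => i \in i0 :: C0)).
  apply: dist_on_unif; first exact: argmin_real_nonempty.
  by apply/allP => i; rewrite mem_filter => /andP[].
move=> i; rewrite -Ca mem_filter => /andP[/andP[i_sel _] iF].
have sel'_uniq : uniq (rcons sel i) by rewrite rcons_uniq i_sel sel_uniq.
have sel'_sub : all (mem Fstar) (rcons sel i) by rewrite all_rcons sel_sub andbT.
apply: IH => //.
- by rewrite size_rcons addnS.
- by move=> j jF; rewrite mem_rcons inE negb_or => /andP[_]; apply: act_cover.
- have := uniq_leq_size sel'_uniq (allP sel'_sub).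
  by rewrite size_rcons; move: fuel_gt => /=; lia.
Qed.

End Niching.

Lemma omm2_nondominated (x y : bitstr) : size x = size y -> ~~ dominates (omm2 x) (omm2 y).
Proof.
rewrite /dominates /omm2 /= -!(count_predC id) -/(zeros x) -/(zeros y) /ones.
by lia.
Qed.

Lemma fronts_same_size {n : nat} {Rt : seq bitstr} : all (fun y => size y == n) Rt ->
  (0 < size Rt)%N -> fronts Rt = [:: iota 0 (size Rt)].
Proof.
move=> Rt_n Rt0; rewrite /fronts.
have size_nth i : (i < size Rt)%N -> size (nth [::] Rt i) = n.
  by move=> i_lt; apply/eqP/(allP Rt_n)/mem_nth.
have nondom_all : nondom Rt (iota 0 (size Rt)) = iota 0 (size Rt).
  apply/all_filterP/allP => i; rewrite mem_iota add0n => i_lt.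
  apply/hasPn => j; rewrite mem_iota add0n => j_lt.
  by apply: omm2_nondominated; rewrite !size_nth.
case: (size Rt) Rt0 nondom_all => // m _ nondom_all.
change (nondom Rt (iota 0 m.+1)
  :: fronts_aux Rt m [seq i <- iota 0 m.+1 | i \notin nondom Rt (iota 0 m.+1)]
  = [:: iota 0 m.+1]).
rewrite nondom_all (eq_in_filter (a2 := pred0)) => [|i ->//].
by rewrite filter_pred0; case: m {nondom_all}.
Qed.

Section Potential.
Context {R : realType}.

Definition pot (P : seq bitstr) : R := \sum_(y <- P) 2 ^+ ones y.

Definition trace_pot (tr : seq (seq bitstr)) : R := \sum_(P <- tr) pot P.

Definition pot_threshold (n : nat) : R := expR (3 / 4 * n%:R * ln 2).

Lemma pot_ge0 P : 0 <= pot P.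
Proof. by apply: sumr_ge0 => y _; apply: exprn_ge0. Qed.

Lemma trace_pot_ge0 tr : 0 <= trace_pot tr.
Proof. by apply: sumr_ge0 => P _; apply: pot_ge0. Qed.

Lemma pot_threshold_le_trace_pot n tr : ~~ no_high n tr -> pot_threshold n <= trace_pot tr.
Proof.
case/allPn=> P P_tr /allPn[y y_P]; rewrite -leqNgt => high_y.
have exp2_y : 2 ^+ ones y = expR ((ones y)%:R * ln 2) :> R.
  by rewrite expRM_natl lnK // posrE.
apply: (@le_trans _ _ (2 ^+ ones y)).
  rewrite exp2_y ler_expR ler_wpM2r ?ln_ge0 ?ler1n // mulrAC ler_pdivrMr // -!natrM ler_nat.
  by move: high_y; lia.
rewrite /trace_pot (big_rem P P_tr) /pot (big_rem y y_P) /= -addrA lerDl.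
by rewrite addr_ge0 ?sumr_ge0 // => [z _|Q _]; [apply: exprn_ge0 | apply: pot_ge0].
Qed.

Lemma ler_sum_uniq_subset (I : eqType) (s1 s2 : seq I) (F : I -> R) :
  uniq s1 -> {subset s1 <= s2} -> (forall i, 0 <= F i) ->
  \sum_(i <- s1) F i <= \sum_(i <- s2) F i.
Proof.
move=> + + F_ge0; elim: s1 s2 => [|x s1 IH] s2; first by rewrite big_nil sumr_ge0.
move=> /= /andP[x_s1 s1_uniq] sub12; have x_s2 := sub12 x (mem_head x s1).
rewrite big_cons (big_rem x x_s2) lerD2l IH // => y y_s1.
rewrite (rem_mem _ (sub12 y _)) ?inE ?y_s1 ?orbT //.
by apply/eqP => yx; rewrite -yx y_s1 in x_s1.
Qed.

Lemma dist_on_survival mu p (nad : seq (seq bitstr) -> vec R) hist n (Rt : seq bitstr) :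
  (0 < mu <= size Rt)%N -> all (fun y => size y == n) Rt ->
  dist_on (survival mu p nad hist Rt)
    (fun P' => [&& size P' == mu, all (fun y => size y == n) P' & pot P' <= pot Rt]).
Proof.
case/andP=> mu0 mu_Rt Rt_n; rewrite /survival (fronts_same_size Rt_n (leq_trans mu0 mu_Rt)).
have -> : split_fronts mu [:: iota 0 (size Rt)] = ([::], iota 0 (size Rt)).
  by rewrite /= size_iota mu_Rt.
apply: dist_on_bind; first apply: dist_on_niche => //.
- exact: iota_uniq.
- by rewrite size_iota.
- by move=> i _ _; rewrite mem_iota ltnS assoc_le.
- by rewrite !size_iota subn0 ltnS.
move=> s /and3P[s_uniq /allP s_sub /eqP]; rewrite /= add0n => s_mu.
apply: dist_on_ret; rewrite /= size_map s_mu eqxx /=; apply/andP; split.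
  rewrite all_map; apply/allP => i /s_sub /=; rewrite mem_iota => /andP[_ i_lt].
  exact: (allP Rt_n _ (mem_nth [::] i_lt)).
rewrite /pot big_map -{2}(mkseq_nth [::] Rt) big_map.
by apply: ler_sum_uniq_subset => // i; apply: exprn_ge0.
Qed.

End Potential.

Section Run.
Context {R : realType}.
Variables (n mu p : nat) (nad : seq (seq bitstr) -> vec R).
Hypotheses (n_gt0 : (0 < n)%N) (mu_gt0 : (0 < mu)%N).

Definition population (P : seq bitstr) : bool :=
  (size P == mu) && all (fun y => size y == n) P.

Definition offspring (P : seq bitstr) : dist R bitstr := dbind (dunif R P) (mutate R n).

Lemma dist_on_offspring {P} : population P -> dist_on (offspring P) (fun y => size y == n).
Proof.
case/andP=> /eqP P_mu P_n; have P_pos : (0 < size P)%N by rewrite P_mu.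
apply: (dist_on_bind (dist_on_unif P_pos P_n)).
by move=> x x_n; have := dist_on_mutate n x n_gt0; rewrite (eqP x_n).
Qed.

Lemma expect_offspring_exp2_le {P} : population P ->
  mu%:R * expect (offspring P) (fun y => 2 ^+ ones y) <= expR 1 * pot P.
Proof.
case/andP=> /eqP P_mu P_n; rewrite expect_bind expect_unif P_mu mulrA mulfV ?pnatr_eq0 -?lt0n //.
rewrite mul1r /pot mulr_sumr !big_seq; apply: ler_sum => x xP.
by apply: expect_mutate_exp2_le => //; apply/eqP/(allP P_n).
Qed.

Lemma dist_on_generation hist {P} : population P ->
  dist_on (generation n mu p nad hist P) (fun RP => population RP.2).
Proof.
move=> P_pop; have /andP[/eqP P_mu P_n] := P_pop; rewrite /generation -/(offspring P).
apply: (dist_on_bind (dist_on_diid mu (dist_on_offspring P_pop))) => Q /andP[Q_n /eqP Q_mu].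
apply: dist_on_bind; first apply: (dist_on_survival mu p nad hist n).
- by rewrite mu_gt0 size_cat P_mu leq_addr.
- by rewrite all_cat P_n.
by move=> P' /and3P[P'_mu P'_n _]; apply: dist_on_ret; rewrite /population P'_mu.
Qed.

Lemma expect_generation_pot_le hist {P} : population P ->
  expect (generation n mu p nad hist P) (fun RP => pot RP.2) <= (1 + expR 1) * pot P.
Proof.
move=> P_pop; have /andP[/eqP P_mu P_n] := P_pop; rewrite /generation -/(offspring P).
have off := dist_on_offspring P_pop; have offs := dist_on_diid mu off.
apply: (@le_trans _ _ (expect (diid mu (offspring P)) (fun Q => pot P + pot Q))).
  rewrite expect_bind; apply: (ler_expect offs) => Q /andP[Q_n /eqP Q_mu].
  have Rt_ok : (0 < mu <= size (P ++ Q))%N by rewrite mu_gt0 size_cat P_mu leq_addr.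
  have Rt_n : all (fun y => size y == n) (P ++ Q) by rewrite all_cat P_n.
  have surv := dist_on_survival mu p nad hist n (P ++ Q) Rt_ok Rt_n.
  have pot_cat : pot (P ++ Q) = pot P + pot Q :> R by rewrite /pot big_cat.
  rewrite expect_bind_ret -pot_cat -(expect_cst (pot (P ++ Q)) surv).
  by apply: (ler_expect surv) => P' /and3P[].
have E_offs : expect (diid mu (offspring P)) (fun Q => pot Q)
              = mu%:R * expect (offspring P) (fun y => 2 ^+ ones y).
  exact: (expect_diid_sum mu _ off).
rewrite expectD (expect_cst _ offs) E_offs mulrDl mul1r lerD2l.
exact: expect_offspring_exp2_le.
Qed.

Lemma dist_on_run_aux T hist {P} : population P -> dist_on (run_aux n mu p nad T hist P) predT.
Proof.
elim: T hist P => [|T IH] hist P P_pop /=; first exact: dist_on_ret.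
apply: (dist_on_bind (dist_on_generation hist P_pop)) => RP /IH run.
by apply: (dist_on_bind (run (rcons hist RP.1))) => tr _; apply: dist_on_ret.
Qed.

Lemma expect_run_aux_pot_le T hist {P} : population P ->
  expect (run_aux n mu p nad T hist P) (fun tr => pot P + trace_pot tr)
    <= pot P * (2 + expR 1) ^+ T.
Proof.
elim: T hist P => [|T IH] hist P P_pop /=.
  by rewrite expect_ret /trace_pot big_nil addr0 expr0 mulr1.
have gen := dist_on_generation hist P_pop.
set H := 2 + expR 1.
apply: (@le_trans _ _
  (expect (generation n mu p nad hist P) (fun RP => pot P + H ^+ T * pot RP.2))).
  rewrite expect_bind; apply: (ler_expect gen) => RP RP_pop.
  have run := dist_on_run_aux T (rcons hist RP.1) RP_pop.
  rewrite expect_bind_ret (eq_in_expect _ (fun tr => pot P + (pot RP.2 + trace_pot tr)) run).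
    by rewrite expectD (expect_cst _ run) lerD2l mulrC IH.
  by move=> tr _; rewrite /trace_pot big_cons.
have HT_ge1 : 1 <= H ^+ T by apply: exprn_ege1; rewrite /H; have := expR_ge0 (1 : R); lra.
have gen_pot := ler_wpM2l (le_trans ler01 HT_ge1) (expect_generation_pot_le hist P_pop).
rewrite expectD (expect_cst _ gen) expectZ exprSr.
have -> : pot P * (H ^+ T * H) = pot P * H ^+ T + H ^+ T * ((1 + expR 1) * pot P).
  by rewrite /H; ring.
by rewrite lerD // ler_peMr ?pot_ge0.
Qed.

Lemma dist_on_initial_population :
  dist_on (diid mu (unif_bitstr R n)) population.
Proof.
apply: sub_dist_on (dist_on_diid mu (dist_on_unif_bitstr n)) => P /andP[P_n P_mu].
by rewrite /population P_mu P_n.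
Qed.

Lemma dist_on_nsga3_run T : dist_on (nsga3_run n mu p nad T) predT.
Proof.
apply: (dist_on_bind dist_on_initial_population) => P0 P0_pop.
by apply: (dist_on_bind (dist_on_run_aux T [::] P0_pop)) => tr _; apply: dist_on_ret.
Qed.

Lemma expect_nsga3_run_trace_pot_le T :
  expect (nsga3_run n mu p nad T) trace_pot <= mu%:R * (1 + 2^-1) ^+ n * (2 + expR 1) ^+ T.
Proof.
have init := dist_on_initial_population.
apply: (@le_trans _ _
  (expect (diid mu (unif_bitstr R n)) (fun P0 => (2 + expR 1) ^+ T * pot P0))).
  rewrite expect_bind; apply: (ler_expect init) => P0 P0_pop.
  have run := dist_on_run_aux T [::] P0_pop.
  rewrite expect_bind_ret mulrC -(eq_in_expect (fun tr => pot P0 + trace_pot tr) _ run).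
    exact: expect_run_aux_pot_le.
  by move=> tr _; rewrite /trace_pot big_cons.
have E_pot : expect (diid mu (unif_bitstr R n)) (fun P0 => pot P0)
             = mu%:R * expect (unif_bitstr R n) (fun y => 2 ^+ ones y).
  exact: (expect_diid_sum mu _ (dist_on_unif_bitstr n)).
by rewrite expectZ E_pot expect_unif_bitstr_exp2 mulrC.
Qed.

Lemma dprob_no_high_ge T :
  1 - mu%:R * (1 + 2^-1) ^+ n * (2 + expR 1) ^+ T / pot_threshold n
    <= dprob (nsga3_run n mu p nad T) (no_high n).
Proof.
have trace_ge0 tr : predT tr -> 0 <= trace_pot tr :> R by move=> _; apply: trace_pot_ge0.
have high tr : predT tr -> ~~ no_high n tr -> pot_threshold n <= trace_pot tr :> R.
  by move=> _; apply: pot_threshold_le_trace_pot.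
apply: le_trans (dprob_ge_markov _ _ _ (dist_on_nsga3_run T) (expR_gt0 _) trace_ge0 high).
by rewrite lerD2l lerN2 ler_wpM2r ?invr_ge0 ?expR_ge0 ?expect_nsga3_run_trace_pot_le.
Qed.

End Run.

Section Asymptotics.
Context {R : realType}.

Lemma ln_le_mul_sub (e y : R) : 0 < e -> 0 < y -> ln y <= e * y - ln e.
Proof.
move=> e0 y0; have := ln_sublinear (mulr_gt0 e0 y0).
by rewrite lnM ?posrE //; lra.
Qed.

Lemma eventually_le_linear (b eps : R) : 0 < eps -> \forall n \near \oo, b <= eps * n%:R.
Proof.
move=> eps0; near=> n.
have n_big : b / eps <= n%:R by near: n; apply: nbhs_infty_ger.
by move: n_big; rewrite ler_pdivrMr // mulrC.
Unshelve. all: by end_near.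
Qed.

Lemma eventually_log_le (a eps : R) (k : nat) : 0 < eps ->
  \forall n \near \oo, a + k%:R * ln (n.+1)%:R <= eps * n%:R.
Proof.
move=> eps0; set e := eps / (2 * (k%:R + 1)).
have k1_gt0 : 0 < k%:R + 1 :> R by rewrite ltr_wpDl.
have e_gt0 : 0 < e by rewrite divr_gt0 ?mulr_gt0.
near=> n.
have n_big : a - k%:R * ln e + eps / 2 <= eps / 2 * n%:R.
  by near: n; apply: eventually_le_linear; rewrite divr_gt0.
have ln_le : k%:R * ln (n.+1)%:R <= k%:R * e * (n.+1)%:R - k%:R * ln e.
  by rewrite -mulrA -mulrBr; apply: ler_wpM2l => //; apply: ln_le_mul_sub.
have ke_le : k%:R * e <= eps / 2.
  rewrite /e mulrA ler_pdivrMr ?mulr_gt0 //.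
  have -> : eps / 2 * (2 * (k%:R + 1)) = k%:R * eps + eps by field.
  by rewrite lerDl ltW.
have ke_le_n := ler_wpM2r (ler0n R n.+1) ke_le.
rewrite -natr1 in ln_le ke_le_n *; lra.
Unshelve. all: by end_near.
Qed.

Lemma eventually_div_ln_le (b eps : R) : 0 < eps ->
  \forall n \near \oo, b * n%:R / ln n%:R <= eps * n%:R.
Proof.
move=> eps0; set r := Num.max (b / eps) 1; near=> n.
have n_big : expR r <= n%:R by near: n; apply: nbhs_infty_ger.
have n_gt0 : 0 < n%:R :> R := lt_le_trans (expR_gt0 r) n_big.
have ln_big : r <= ln n%:R by rewrite -ler_expR lnK.
have ln_gt0 : 0 < ln n%:R :> R by apply: lt_le_trans ln_big; rewrite lt_max ltr01 orbT.
rewrite ler_pdivrMr // [X in _ <= X]mulrAC ler_pM2r // mulrC -ler_pdivrMr //.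
by apply: le_trans ln_big; rewrite le_max lexx.
Unshelve. all: by end_near.
Qed.

Lemma ln_three_halves_lt : ln (1 + 2^-1 : R) < 3 / 4 * ln 2.
Proof.
have : ln ((1 + 2^-1) ^+ 4) < ln (2 ^+ 3 : R).
  rewrite ltr_ln ?posrE ?exprn_gt0 ?addr_gt0 ?invr_gt0 //.
  have -> : (1 + 2^-1 : R) ^+ 4 = 81 / 16 by rewrite !exprS expr0; field.
  by rewrite ltr_pdivrMr // -natrX -natrM ltr_nat.
by rewrite !lnXn //; lra.
Qed.

Lemma exprn_expR (x : R) m : 0 < x -> x ^+ m = expR (m%:R * ln x).
Proof. by move=> x0; rewrite expRM_natl lnK. Qed.

Lemma eventually_markov_bound_le (C k : nat) {c delta : R} :
  (0 < C)%N -> 0 < c -> 0 < delta ->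
  \forall n \near \oo, forall T : nat, T%:R <= c * n%:R / ln n%:R ->
    (C * n.+1 ^ k)%:R * (1 + 2^-1) ^+ n * (2 + expR 1) ^+ T / pot_threshold n <= delta.
Proof.
move=> C_gt0 c_gt0 delta_gt0; set H : R := 2 + expR 1.
set alpha := 3 / 4 * ln (2 : R) - ln (1 + 2^-1).
have alpha_gt0 : 0 < alpha by rewrite subr_gt0 ln_three_halves_lt.
have H_gt1 : 1 < H by rewrite /H; have := expR_ge0 (1 : R); lra.
have lnH_gt0 := ln_gt0 H_gt1.
near=> n => T T_le.
have poly_small : ln C%:R - ln delta + k%:R * ln (n.+1)%:R <= alpha / 2 * n%:R.
  by near: n; apply: eventually_log_le; rewrite divr_gt0.
have time_small : c * ln H * n%:R / ln n%:R <= alpha / 2 * n%:R.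
  by near: n; apply: eventually_div_ln_le; rewrite divr_gt0.
have T_small : T%:R * ln H <= alpha / 2 * n%:R.
  apply: le_trans time_small.
  have -> : c * ln H * n%:R / ln n%:R = c * n%:R / ln n%:R * ln H by ring.
  by apply: ler_wpM2r => //; exact: ltW.
have -> : (C * n.+1 ^ k)%:R * (1 + 2^-1) ^+ n * H ^+ T
          = expR (ln C%:R + k%:R * ln (n.+1)%:R + n%:R * ln (1 + 2^-1) + T%:R * ln H).
  rewrite !expRD lnK ?posrE ?ltr0n // -!exprn_expR ?ltr0Sn ?ltW ?(lt_trans ltr01) //.
    by rewrite natrM natrX.
  by rewrite ltrDl invr_gt0.
rewrite /pot_threshold -expRB -[delta]lnK ?posrE // ler_expR.
by move: poly_small T_small; rewrite /alpha; lra.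
Unshelve. all: by end_near.
Qed.

End Asymptotics.

Theorem lemma5 (R : realType) (mu p : nat -> nat) (eps_nad : nat -> R)
    (nad : nat -> seq (seq bitstr) -> R * R) (c : R) :
  (forall n : nat, (n.+1 <= mu n)%N) ->
  (exists C k : nat, forall n : nat, (mu n <= C * n.+1 ^ k)%N) ->
  (forall n : nat, n%:R <= eps_nad n) ->
  (forall n : nat, (4 : R) * Num.sqrt (2 : R) * n%:R <= (p n)%:R) ->
  (forall (n : nat) (hist : seq (seq bitstr)),
      eps_nad n <= (nad n hist).1 /\ eps_nad n <= (nad n hist).2) ->
  0 < c ->
  forall delta : R, 0 < delta ->
  exists N : nat, forall n : nat, (N <= n)%N ->
  forall T : nat, T%:R <= c * n%:R / ln (n%:R : R) ->
    1 - delta <= dprob (nsga3_run n (mu n) (p n) (nad n) T) (no_high n).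
Proof.
move=> mu_ge [C [k mu_le]] _ _ _ c_gt0 delta delta_gt0.
have C_gt0 : (0 < C)%N by have := leq_trans (mu_ge 0%N) (mu_le 0%N); rewrite exp1n muln1.
have [N _ markov_bound] := eventually_markov_bound_le C k C_gt0 c_gt0 delta_gt0.
exists N.+1 => n N_lt T T_le; have n_gt0 := leq_ltn_trans (leq0n N) N_lt.
have mu_gt0 : (0 < mu n)%N := leq_trans (ltn0Sn n) (mu_ge n).
apply: le_trans (dprob_no_high_ge n (mu n) (p n) (nad n) n_gt0 mu_gt0 T).
rewrite lerD2l lerN2; have := markov_bound n (ltnW N_lt) T T_le; apply: le_trans.
by rewrite !ler_pM2r ?invr_gt0 ?exprn_gt0 ?addr_gt0 ?invr_gt0 ?expR_gt0 ?ler_nat ?mu_le.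
Qed.
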